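(* Let $\mathbf A\in\mathbb R^{2\times2}_{\rm sym}$ be positive definite with eigenvalues $a_1,a_2$, let $\delta:=\frac12\sqrt{\operatorname{tr}^2\log\mathbf A-4\det\log\mathbf A}=\frac12|\log a_1-\log a_2|$, and let $\theta(x):=\frac2{\sinh(2x)}-\frac1x$ for $x\ne0$, with $\frac{\theta(\delta)}{\delta}$ understood as $\lim_{x\to0}\frac{\theta(x)}x=-\frac23$ when $\delta=0$. Then for all $\mathbf X\in\mathbb R^{2\times2}$, writing $\mathbf L=\log\mathbf A$ and $\mathbf Z:=\mathbf L^2\mathbf X-2\mathbf L\mathbf X\mathbf L+\mathbf X\mathbf L^2$, $\lim_{s\to0}\frac{\log(\mathbf A+s\mathbf X)-\log\mathbf A}{s}=\frac12(\mathbf A^{-1}\mathbf X+\mathbf X\mathbf A^{-1})+\frac{\theta(\delta)}{8\delta}\big(\mathbf A^{-1}\mathbf Z+\mathbf Z\mathbf A^{-1}\big),$ where $\frac{d\log\mathbf A}{d\mathbf A}\mathbf X$ on the left is the Fréchet derivative of the matrix logarithm (extended linearly to nonsymmetric directions via the Daleckiĭ–Kreĭn formula).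
   Context: $\log\mathbf A$ denotes the spectrally defined matrix logarithm of a symmetric positive definite matrix. For non-symmetric $\mathbf X$, the left-hand side is to be understood as $\frac{d\log\mathbf A}{d\mathbf A}\mathbf X:=\mathbf Q\big([F(a_i,a_j)]\odot(\mathbf Q^{\mathsf T}\mathbf X\mathbf Q)\big)\mathbf Q^{\mathsf T}$ where $\mathbf A=\mathbf Q\operatorname{diag}(a_1,a_2)\mathbf Q^{\mathsf T}$, $\odot$ is the entrywise product, $F(x,y)=\frac{\log x-\log y}{x-y}$ for $x\ne y$ and $F(x,x)=1/x$. *)

From HB Require Import structures.
From mathcomp Require Import all_boot all_order all_algebra.
From mathcomp Require Import all_classical all_reals all_analysis.
Set Implicit Arguments. Unset Strict Implicit. Unset Printing Implicit Defensive.
Import Order.TTheory GRing.Theory Num.Theory.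
Import numFieldNormedType.Exports.
Local Open Scope ring_scope.

Section Defs.
Variable R : realType.

Definition spd (A : 'M[R]_2) : Prop :=
  A^T = A /\ forall v : 'cV[R]_2, v != 0 -> 0 < (v^T *m A *m v) 0 0.

Definition is_orth (Q : 'M[R]_2) : Prop := Q^T *m Q = 1%:M.

(* spectrally defined matrix logarithm: for M = Q diag(d) Q^T with Q
   orthogonal, log M := Q diag(ln d) Q^T (a chosen decomposition; the value
   is independent of the choice when M is SPD). Junk value 0 if M has no
   orthogonal diagonalisation. *)
Definition mxlog (M : 'M[R]_2) : 'M[R]_2 :=
  match pselect (exists Qd : 'M[R]_2 * 'rV[R]_2,
                   is_orth Qd.1 /\ M = Qd.1 *m diag_mx Qd.2 *m Qd.1^T) with
  | left h => let Qd := projT1 (cid h) in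
              Qd.1 *m diag_mx (map_mx (@ln R) Qd.2) *m Qd.1^T
  | right _ => 0
  end.

Definition Flog (x y : R) : R :=
  if x == y then x^-1 else (ln x - ln y) / (x - y).

Definition DKlog (Q : 'M[R]_2) (a : 'rV[R]_2) (X : 'M[R]_2) : 'M[R]_2 :=
  Q *m (\matrix_(i, j) (Flog (a 0 i) (a 0 j) * (Q^T *m X *m Q) i j)) *m Q^T.

Definition sinh (x : R) : R := (expR x - expR (- x)) / 2.

Definition theta (x : R) : R := 2 / sinh (2 * x) - x^-1.

Definition theta_over (x : R) : R :=
  if x == 0 then - (2 / 3) else theta x / x.

Definition delta_of (A : 'M[R]_2) : R :=
  let L := mxlog A in 2^-1 * Num.sqrt (\tr L ^+ 2 - 4 * \det L).

Definition Zmat (A X : 'M[R]_2) : 'M[R]_2 :=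
  let L := mxlog A in L *m L *m X - 2 *: (L *m X *m L) + X *m L *m L.

Definition rhs (A X : 'M[R]_2) : 'M[R]_2 :=
  let Ai := invmx A in let Z := Zmat A X in
  2^-1 *: (Ai *m X + X *m Ai)
  + (theta_over (delta_of A) / 8) *: (Ai *m Z + Z *m Ai).

End Defs.

(* An orthogonal [Q] with [A = Q diag(a) Q^T] reduces everything to the diagonal case,
   with [Y := Q^T X Q]. For a 2x2 symmetric positive definite [M] with eigenvalues
   [e1 >= e2], [log M] is the interpolation polynomial of [ln] at [e1], [e2]:
     log M = ln (det M) / 2 + F(e1, e2) (M - tr M / 2),
   where [F] is the divided difference of [ln]. In the eigenbasis both sides of the
   Daleckii-Krein identity are then entrywise multiples of [Y], and the identity reduces to
     F(x, y) = (x^-1 + y^-1) / 2 + theta(delta) / (8 delta) (x^-1 + y^-1) (ln x - ln y)^2.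
   Along [B s = diag(a) + s Y] the same formula writes the difference quotient of [log]
   as a combination of three fixed matrices, whose coefficients (difference quotients
   of [ln det B s] and of [F] at the eigenvalues of [B s], and [F] itself) converge by
   continuity of [F] and the chain rule for [ln]. *)

From HB Require Import structures.
From mathcomp Require Import all_boot all_order all_algebra.
From mathcomp Require Import all_classical all_reals all_analysis.
From mathcomp Require Import ring lra.

Set Implicit Arguments.
Unset Strict Implicit.
Unset Printing Implicit Defensive.

Import Order.TTheory GRing.Theory Num.Theory.
Import numFieldNormedType.Exports.
Local Open Scope classical_set_scope.
Local Open Scope ring_scope.

Notation i0 := (@ord0 1).
Notation i1 := (@ord_max 1).

Section DividedDifference.
Context {R : realType}.
Implicit Types x y : R.

Lemma Flogxx x : Flog x x = x^-1.
Proof. by rewrite /Flog eqxx. Qed.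

Lemma FlogC x y : Flog x y = Flog y x.
Proof.
rewrite /Flog eq_sym; case: eqP => [->//|_].
by rewrite -mulrNN !opprB -invrN opprB.
Qed.

Lemma mul_subr_Flog x y : (x - y) * Flog x y = ln x - ln y.
Proof.
rewrite /Flog; case: eqP => [->|/eqP xy]; first by rewrite !subrr mul0r.
by rewrite mulrC mulfVK // subr_eq0.
Qed.

Lemma ln_le_subr1 x : 0 < x -> ln x <= x - 1.
Proof. by move=> x0; have := expR_ge1Dx (ln x); rewrite lnK ?posrE // => h; lra. Qed.

Lemma Flog_bounds x y : 0 < y < x -> x^-1 <= Flog x y <= y^-1.
Proof.
case/andP=> y0 yx; have x0 := lt_trans y0 yx.
rewrite /Flog gt_eqF // ler_pdivlMr ?ler_pdivrMr ?subr_gt0 //.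
have lnxy : ln x - ln y <= x / y - 1.
  by rewrite -ln_div ?posrE // ln_le_subr1 // divr_gt0.
have lnyx : ln y - ln x <= y / x - 1.
  by rewrite -ln_div ?posrE // ln_le_subr1 // divr_gt0.
have -> : x^-1 * (x - y) = 1 - y / x by field; rewrite gt_eqF.
have -> : y^-1 * (x - y) = x / y - 1 by field; rewrite gt_eqF.
by apply/andP; split; lra.
Qed.

Lemma Flog_between x y : 0 < x -> 0 < y ->
  (Flog x y - x^-1) * (Flog x y - y^-1) <= 0.
Proof.
wlog yx : x y / y <= x => [hwlog x0 y0|x0 y0].
  have [/hwlog|/ltW/hwlog] := leP y x; first exact.
  by rewrite FlogC mulrC; apply.
have [->|xy] := eqVneq x y; first by rewrite Flogxx subrr mul0r.
have /andP[lo hi] : x^-1 <= Flog x y <= y^-1.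
  by apply: Flog_bounds; rewrite y0 lt_def xy.
by apply: mulr_ge0_le0; rewrite ?subr_ge0 ?subr_le0.
Qed.

Lemma between_bounds (a b z : R) : (z - a) * (z - b) <= 0 ->
  (a + b - `|a - b|) / 2 <= z <= (a + b + `|a - b|) / 2.
Proof. by move=> h; apply/andP; split; case: (lerP a b) => ab; nra. Qed.
End DividedDifference.

Section DividedDifferenceLimits.
Context {R : realType}.
Context {T : Type} {F : set_system T} {FF : Filter F}.
Implicit Types (u v h : T -> R) (x y d : R).

Lemma Flog_cvg u v x y : 0 < x -> 0 < y ->
  u t @[t --> F] --> x -> v t @[t --> F] --> y ->
  Flog (u t) (v t) @[t --> F] --> Flog x y.
Proof.
move=> x0 y0 ux vy; have [exy|xy] := eqVneq x y.
  subst y; rewrite Flogxx.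
  have uV : (u t)^-1 @[t --> F] --> x^-1 by apply: cvgV; rewrite ?gt_eqF.
  have vV : (v t)^-1 @[t --> F] --> x^-1 by apply: cvgV; rewrite ?gt_eqF.
  have dist0 : `|(u t)^-1 - (v t)^-1| @[t --> F] --> 0.
    by rewrite -(normr0 R) -(subrr x^-1); apply: cvg_norm; apply: cvgB.
  have mid c : x^-1 = (x^-1 + x^-1 + c * 0) / 2 by lra.
  apply: (squeeze_cvgr (f := fun t => ((u t)^-1 + (v t)^-1 - `|(u t)^-1 - (v t)^-1|) / 2)
                       (h := fun t => ((u t)^-1 + (v t)^-1 + `|(u t)^-1 - (v t)^-1|) / 2)).
  - near=> t; apply/between_bounds/Flog_between.
      by near: t; exact: (@cvgr_gt R _ _ _ _ _ ux 0 x0).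
    by near: t; exact: (@cvgr_gt R _ _ _ _ _ vy 0 x0).
  - by rewrite (mid (-1)) mulN1r; apply: cvgM; [apply: cvgB => //; apply: cvgD | exact: cvg_cst].
  - by rewrite (mid 1) mul1r; apply: cvgM; [apply: cvgD => //; apply: cvgD | exact: cvg_cst].
have uvxy : `|u t - v t| @[t --> F] --> `|x - y| by apply: cvg_norm; apply: cvgB.
apply: cvg_trans; first apply: (near_eq_cvg (f := fun t => (ln (u t) - ln (v t)) / (u t - v t))).
  near=> t.
  have : 0 < `|u t - v t|.
    by near: t; apply: (@cvgr_gt R _ _ _ _ _ uvxy); rewrite normr_gt0 subr_eq0.
  by rewrite normr_gt0 subr_eq0 /Flog => /negbTE ->.
rewrite /Flog (negbTE xy); apply: cvgM.
  by apply: cvgB; [exact: cvg_comp ux (continuous_ln x0) | exact: cvg_comp vy (continuous_ln y0)].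
by apply: cvgV; [rewrite subr_eq0 | apply: cvgB].
Unshelve. all: by end_near.
Qed.

Lemma ln_difq_cvg u h x d : 0 < x -> u t @[t --> F] --> x ->
  (u t - x) / h t @[t --> F] --> d ->
  (ln (u t) - ln x) / h t @[t --> F] --> d / x.
Proof.
move=> x0 ux difq.
have -> : (fun t => (ln (u t) - ln x) / h t) = (fun t => Flog (u t) x * ((u t - x) / h t)).
  by apply: funext => t; rewrite -mul_subr_Flog FlogC mulrA [Flog _ _ * _]mulrC.
by rewrite mulrC -Flogxx; apply: cvgM => //; apply: Flog_cvg => //; exact: cvg_cst.
Qed.
End DividedDifferenceLimits.

Lemma affine_cvg {R : realType} (u v : R) : u + s * v @[s --> 0^'] --> u.
Proof.
have : u + s * v @[s --> 0^'] --> u + 0 * v.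
  by apply: cvgD; [exact: cvg_cst | apply: cvgM; [exact: cvg_within | exact: cvg_cst]].
by rewrite mul0r addr0.
Qed.

Lemma Flog_thetaE {R : realType} (x y : R) : 0 < x -> 0 < y ->
  Flog x y = 2^-1 * (x^-1 + y^-1) +
    theta_over (2^-1 * `|ln x - ln y|) / 8 * ((x^-1 + y^-1) * (ln x - ln y) ^+ 2).
Proof.
move=> x0 y0; have [<-|xy] := eqVneq x y.
  by rewrite Flogxx subrr expr0n /= !mulr0 addr0; lra.
set t := ln x - ln y.
have t0 : t != 0 by rewrite subr_eq0; apply: contra xy => /eqP/ln_inj ->; rewrite ?posrE.
have expt : expR t = x / y by rewrite expRB !lnK.
have expNt : expR (- t) = y / x by rewrite expRN expt invf_div.
have sq : (x * x == y * y) = false.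
  by apply/negbTE; rewrite -subr_eq0 -!expr2 subr_sqr mulf_neq0 ?subr_eq0 // gt_eqF ?addr_gt0.
rewrite /Flog (negbTE xy) -/t /theta_over mulf_eq0 invr_eq0 normr_eq0 (negbTE t0) orbF.
rewrite ifF ?pnatr_eq0 // /theta /sinh.
have -> : 2 * (2^-1 * `|t|) = `|t| by lra.
have [t_gt0|t_le0] := ltrP 0 t.
  by rewrite gtr0_norm // expt expNt; field; rewrite t0 mulNr !subr_eq0 sq xy !gt_eqF.
rewrite ler0_norm // opprK expt expNt.
by field; rewrite t0 mulNr !subr_eq0 (eq_sym (y * y)) sq xy !gt_eqF.
Qed.

Lemma ord2P (i : 'I_2) : i = i0 \/ i = i1.
Proof. by case: i => [[|[|k]] Hi]; [left|right|]; try apply: val_inj. Qed.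

Lemma mx2P (T : Type) (A B : 'M[T]_2) :
  A i0 i0 = B i0 i0 -> A i0 i1 = B i0 i1 ->
  A i1 i0 = B i1 i0 -> A i1 i1 = B i1 i1 -> A = B.
Proof.
move=> e00 e01 e10 e11; apply/matrixP => i j.
by case: (ord2P i) => ->; case: (ord2P j) => ->.
Qed.

Lemma mulmx2E (K : pzSemiRingType) m n (A : 'M[K]_(m, 2)) (B : 'M[K]_(2, n)) i j :
  (A *m B) i j = A i i0 * B i0 j + A i i1 * B i1 j.
Proof.
rewrite mxE !big_ord_recl big_ord0 addr0 /=.
by have -> : lift i0 (@ord0 0) = i1 by apply: val_inj.
Qed.

Definition mx2 {T : Type} (a b c d : T) : 'M[T]_2 :=
  \matrix_(i, j) if i == i0 then (if j == i0 then a else b)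
                 else (if j == i0 then c else d).

Definition rv2 {T : Type} (a b : T) : 'rV[T]_2 := \row_j if j == i0 then a else b.

Section Mx2Entries.
Variables (T : Type) (a b c d : T).
Lemma mx2_00 : mx2 a b c d i0 i0 = a. Proof. by rewrite mxE. Qed.
Lemma mx2_01 : mx2 a b c d i0 i1 = b. Proof. by rewrite mxE. Qed.
Lemma mx2_10 : mx2 a b c d i1 i0 = c. Proof. by rewrite mxE. Qed.
Lemma mx2_11 : mx2 a b c d i1 i1 = d. Proof. by rewrite mxE. Qed.
Lemma rv2_0 : rv2 a b 0 i0 = a. Proof. by rewrite mxE. Qed.
Lemma rv2_1 : rv2 a b 0 i1 = b. Proof. by rewrite mxE. Qed.
End Mx2Entries.
Definition mx2E := (mx2_00, mx2_01, mx2_10, mx2_11, rv2_0, rv2_1).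

Section OrthogonalConjugation.
Context {R : realType}.
Implicit Types (Q B C : 'M[R]_2) (d : 'rV[R]_2).

Lemma orth_mulmxT Q : is_orth Q -> Q *m Q^T = 1%:M.
Proof. exact: mulmx1C. Qed.

Lemma orth_conjM Q B C : is_orth Q ->
  Q *m B *m Q^T *m (Q *m C *m Q^T) = Q *m (B *m C) *m Q^T.
Proof. by move=> hQ; rewrite !mulmxA -(mulmxA _ Q^T Q) hQ mulmx1. Qed.

Lemma orth_conjK Q B : is_orth Q -> Q *m (Q^T *m B *m Q) *m Q^T = B.
Proof.
by move=> hQ; rewrite !mulmxA orth_mulmxT // mul1mx -mulmxA orth_mulmxT // mulmx1.
Qed.

Lemma orth_mul Q P : is_orth Q -> is_orth P -> is_orth (Q *m P).
Proof.
move=> hQ hP; rewrite /is_orth trmx_mul -mulmxA (mulmxA Q^T) hQ mul1mx; exact: hP.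
Qed.

Lemma tr_conj_diag Q d : is_orth Q -> \tr (Q *m diag_mx d *m Q^T) = d 0 i0 + d 0 i1.
Proof.
move=> hQ; rewrite mxtrace_mulC mulmxA hQ mul1mx mxtrace_diag.
rewrite !big_ord_recl big_ord0 addr0 /=.
by have -> : lift i0 (@ord0 0) = i1 by apply: val_inj.
Qed.

Lemma det_conj_diag Q d : is_orth Q -> \det (Q *m diag_mx d *m Q^T) = d 0 i0 * d 0 i1.
Proof.
move=> hQ; rewrite !det_mulmx det_tr det_diag mulrAC -{1}(det_tr Q) -det_mulmx hQ.
rewrite det1 mul1r !big_ord_recl big_ord0 mulr1 /=.
by have -> : lift i0 (@ord0 0) = i1 by apply: val_inj.
Qed.
End OrthogonalConjugation.

Section Spectral2.
Context {R : realType}.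
Implicit Types (M : 'M[R]_2) (p q co si c r : R).

Definition eig_halfgap M := Num.sqrt (((M i0 i0 - M i1 i1) / 2) ^+ 2 + M i0 i1 ^+ 2).
Definition eigmax M := (M i0 i0 + M i1 i1) / 2 + eig_halfgap M.
Definition eigmin M := (M i0 i0 + M i1 i1) / 2 - eig_halfgap M.

Lemma sqr_eig_halfgap M :
  eig_halfgap M ^+ 2 = ((M i0 i0 - M i1 i1) / 2) ^+ 2 + M i0 i1 ^+ 2.
Proof. by rewrite sqr_sqrtr // addr_ge0 // sqr_ge0. Qed.

Lemma eig_halfgap_ge0 M : 0 <= eig_halfgap M.
Proof. exact: sqrtr_ge0. Qed.

Lemma eigmax_mul_eigmin M : eigmax M * eigmin M = M i0 i0 * M i1 i1 - M i0 i1 ^+ 2.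
Proof.
have := sqr_eig_halfgap M; rewrite /eigmax /eigmin; set h := eig_halfgap M => h2.
have -> : ((M i0 i0 + M i1 i1) / 2 + h) * ((M i0 i0 + M i1 i1) / 2 - h) =
  ((M i0 i0 + M i1 i1) / 2) ^+ 2 - h ^+ 2 by ring.
by rewrite h2; field.
Qed.

Lemma eigmin_le_eigmax M : eigmin M <= eigmax M.
Proof. by rewrite lerD2l ge0_cp // eig_halfgap_ge0. Qed.

Definition rot co si : 'M[R]_2 := mx2 co (- si) si co.

Lemma rot_orth co si : co ^+ 2 + si ^+ 2 = 1 -> is_orth (rot co si).
Proof.
move=> h; apply: mx2P; rewrite /rot mulmx2E ![(_^T) _ _]mxE ?mx2E !mxE /=; nra.
Qed.

Lemma rot_conj_diag co si c r : co ^+ 2 + si ^+ 2 = 1 ->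
  rot co si *m diag_mx (rv2 (c + r) (c - r)) *m (rot co si)^T =
  mx2 (c + r * (co ^+ 2 - si ^+ 2)) (2 * r * co * si)
      (2 * r * co * si) (c - r * (co ^+ 2 - si ^+ 2)).
Proof.
move=> h; have c1 : c = c * (co ^+ 2 + si ^+ 2) by rewrite h mulr1.
apply: mx2P; rewrite /rot !mulmx2E ![(_^T) _ _]mxE ?mx2E !mxE /= ?mx2E !mulr1n !mulr0n;
  [rewrite [in RHS]c1 | | | rewrite [in RHS]c1]; ring.
Qed.

(* [(p, q)] in polar form [r (cos 2phi, sin 2phi)], with [co, si] = [cos phi, sin phi]. *)
Lemma half_angle p q : exists co si, [/\ co ^+ 2 + si ^+ 2 = 1,
  Num.sqrt (p ^+ 2 + q ^+ 2) * (co ^+ 2 - si ^+ 2) = p &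
  2 * Num.sqrt (p ^+ 2 + q ^+ 2) * co * si = q].
Proof.
set r := Num.sqrt _.
have r_ge0 : 0 <= r := sqrtr_ge0 _.
have q2 : q ^+ 2 = r ^+ 2 - p ^+ 2 by rewrite sqr_sqrtr ?addr_ge0 ?sqr_ge0 //; ring.
have p_le_r : - r <= p <= r.
  have : p ^+ 2 <= r ^+ 2 by rewrite -subr_ge0 -q2 sqr_ge0.
  by move=> h; apply/andP; split; nra.
have [rp_gt0|rp_le0] := ltrP 0 (r + p); last first.
  have p_eq : p = - r by case/andP: p_le_r => ? ?; lra.
  exists 0, 1; rewrite expr0n expr1n /= add0r; split => //; last first.
    by move: q2; rewrite p_eq sqrrN subrr => /eqP; rewrite sqrf_eq0 mulr0 mul0r => /eqP.
  by rewrite p_eq; ring.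
have r_gt0 : 0 < r by case/andP: p_le_r => ? ?; lra.
set n := Num.sqrt (2 * r * (r + p)).
have n2 : n ^+ 2 = 2 * r * (r + p) by rewrite sqr_sqrtr // !mulr_ge0 // ltW.
have n_gt0 : 0 < n by rewrite sqrtr_gt0 !mulr_gt0.
exists ((r + p) / n), (q / n).
have -> : 2 * r * ((r + p) / n) * (q / n) = 2 * r * (r + p) * q / n ^+ 2.
  by rewrite expr2; field; rewrite gt_eqF.
by rewrite !expr_div_n n2 q2; split; field; rewrite !gt_eqF.
Qed.

Lemma spectral2 M : M i0 i1 = M i1 i0 ->
  exists2 Q, is_orth Q & M = Q *m diag_mx (rv2 (eigmax M) (eigmin M)) *m Q^T.
Proof.
move=> Msym.
have [co [si [h1 hp hq]]] := half_angle ((M i0 i0 - M i1 i1) / 2) (M i0 i1).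
exists (rot co si); first exact: rot_orth.
rewrite /eigmax /eigmin rot_conj_diag // -/(eig_halfgap M) in hp hq *.
apply: mx2P; rewrite !mx2E -?Msym ?(mulrA _ co) ?hq //; lra.
Qed.
End Spectral2.

Section MatrixLog.
Context {R : realType}.
Implicit Types (M Q : 'M[R]_2) (d : 'rV[R]_2) (x y : R).

Definition lninterp M x y : 'M[R]_2 :=
  ((ln x + ln y) / 2) *: 1%:M + Flog x y *: (M - ((x + y) / 2) *: 1%:M).

Lemma lninterpC M x y : lninterp M x y = lninterp M y x.
Proof. by rewrite /lninterp FlogC (addrC (ln x)) (addrC x). Qed.

Lemma lninterp_conj Q M x y : is_orth Q ->
  lninterp (Q *m M *m Q^T) x y = Q *m lninterp M x y *m Q^T.
Proof.
move=> hQ; rewrite /lninterp mulmxDr mulmxDl -!scalemxAr -!scalemxAl.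
by rewrite mulmxBr mulmxBl -!scalemxAr -!scalemxAl !mulmx1 orth_mulmxT.
Qed.

Lemma lninterp_diag d : lninterp (diag_mx d) (d 0 i0) (d 0 i1) = diag_mx (map_mx (@ln R) d).
Proof.
have lnE := mul_subr_Flog (d 0 i0) (d 0 i1).
by apply: mx2P; rewrite !mxE /= ?mulr1n ?mulr0n ?mulr0 ?subr0 ?addr0 //; lra.
Qed.

Lemma sum_prod_eq (x y u v : R) : u + v = x + y -> u * v = x * y ->
  (u = x /\ v = y) \/ (u = y /\ v = x).
Proof.
move=> s p; have : (u - x) * (u - y) = 0.
  have -> : (u - x) * (u - y) = u * (u - (x + y)) + x * y by ring.
  by rewrite -s -p; ring.
by move/eqP; rewrite mulf_eq0 !subr_eq0 => /orP[]/eqP eu; [left|right]; split; lra.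
Qed.

Lemma mxlog_conj_diag Q d M : is_orth Q -> M = Q *m diag_mx d *m Q^T ->
  mxlog M = Q *m diag_mx (map_mx (@ln R) d) *m Q^T.
Proof.
have lnE Q' d' : is_orth Q' -> M = Q' *m diag_mx d' *m Q'^T ->
    Q' *m diag_mx (map_mx (@ln R) d') *m Q'^T = lninterp M (d' 0 i0) (d' 0 i1).
  by move=> hQ' ->; rewrite lninterp_conj // lninterp_diag.
move=> hQ eM; rewrite /mxlog; case: pselect => [h|]; last by case; exists (Q, d).
case: (cid h) => -[Q' d'] /= [hQ' eM']; rewrite lnE // lnE //.
have tr_eq : d' 0 i0 + d' 0 i1 = d 0 i0 + d 0 i1.
  by rewrite -(tr_conj_diag d hQ) -(tr_conj_diag d' hQ') -eM -eM'.
have det_eq : d' 0 i0 * d' 0 i1 = d 0 i0 * d 0 i1.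
  by rewrite -(det_conj_diag d hQ) -(det_conj_diag d' hQ') -eM -eM'.
by have [[-> ->]|[-> ->]] := sum_prod_eq tr_eq det_eq; last exact: lninterpC.
Qed.

Lemma mxlog_sym M : M i0 i1 = M i1 i0 -> mxlog M = lninterp M (eigmax M) (eigmin M).
Proof.
move=> Msym; have [Q hQ eM] := spectral2 Msym.
rewrite (mxlog_conj_diag hQ eM).
have := lninterp_diag (rv2 (eigmax M) (eigmin M)); rewrite !mx2E => <-.
by rewrite -lninterp_conj // -eM.
Qed.

Lemma mxlog_conj Q M : is_orth Q -> M i0 i1 = M i1 i0 ->
  mxlog (Q *m M *m Q^T) = Q *m mxlog M *m Q^T.
Proof.
move=> hQ Msym; have [P hP eM] := spectral2 Msym.
have eQM : Q *m M *m Q^T = (Q *m P) *m diag_mx (rv2 (eigmax M) (eigmin M)) *m (Q *m P)^T.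
  by rewrite {1}eM trmx_mul !mulmxA.
by rewrite (mxlog_conj_diag (orth_mul hQ hP) eQM) (mxlog_conj_diag hP eM) trmx_mul !mulmxA.
Qed.
End MatrixLog.

Section DaleckiiKrein.
Context {R : realType}.
Implicit Types (A Q X : 'M[R]_2) (a : 'rV[R]_2).

(* [a k] is the quadratic form of [A] at the unit eigenvector [Q e_k]. *)
Lemma spd_conj_diag_gt0 A Q a : spd A -> is_orth Q -> A = Q *m diag_mx a *m Q^T ->
  forall k, 0 < a 0 k.
Proof.
move=> [_ Apos] hQ eA k; set e : 'cV[R]_2 := delta_mx k 0.
have Qe_neq0 : Q *m e != 0.
  apply: contraTneq isT => Qe0; have : Q^T *m (Q *m e) = e by rewrite mulmxA hQ mul1mx.
  by rewrite Qe0 mulmx0 => /matrixP/(_ k 0); rewrite !mxE !eqxx => /esym/eqP; rewrite oner_eq0.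
have := Apos _ Qe_neq0.
rewrite trmx_mul eA !mulmxA -(mulmxA _ Q^T Q) hQ mulmx1 -(mulmxA _ Q^T Q) hQ mulmx1.
rewrite mul_mx_diag !mxE (bigD1 k) //= big1 ?addr0 => [|j /negbTE jk].
  by rewrite !mxE !eqxx mulr1 mul1r.
by rewrite !mxE jk mulr0 ?mul0r.
Qed.

Lemma invmx_conj_diag A Q a : is_orth Q -> A = Q *m diag_mx a *m Q^T ->
  a 0 i0 != 0 -> a 0 i1 != 0 -> invmx A = Q *m diag_mx (map_mx GRing.inv a) *m Q^T.
Proof.
move=> hQ eA a0 a1.
have AV : A *m (Q *m diag_mx (map_mx GRing.inv a) *m Q^T) = 1%:M.
  have aV : diag_mx a *m diag_mx (map_mx GRing.inv a) = 1%:M.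
    by apply: mx2P; rewrite mul_diag_mx !mxE /= ?mulr0 ?mulr1n ?mulr0n ?mulfV.
  by rewrite eA orth_conjM // aV mulmx1 orth_mulmxT.
have [Aunit _] := mulmx1_unit AV.
by rewrite -[LHS]mulmx1 -AV mulKmx.
Qed.

Lemma delta_of_conj_diag A Q a : is_orth Q -> A = Q *m diag_mx a *m Q^T ->
  delta_of A = 2^-1 * `|ln (a 0 i0) - ln (a 0 i1)|.
Proof.
move=> hQ eA; rewrite /delta_of (mxlog_conj_diag hQ eA) tr_conj_diag ?det_conj_diag // !mxE.
by congr (_ * _); rewrite -sqrtr_sqr; congr Num.sqrt; ring.
Qed.

Lemma DKlog_rhs A X Q a : spd A -> is_orth Q -> A = Q *m diag_mx a *m Q^T ->
  DKlog Q a X = rhs A X.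
Proof.
move=> hA hQ eA; have a_gt0 := spd_conj_diag_gt0 hA hQ eA.
have cjD B C : Q *m B *m Q^T + Q *m C *m Q^T = Q *m (B + C) *m Q^T.
  by rewrite mulmxDr mulmxDl.
have cjB B C : Q *m B *m Q^T - Q *m C *m Q^T = Q *m (B - C) *m Q^T.
  by rewrite mulmxBr mulmxBl.
have cjZ (k : R) B : k *: (Q *m B *m Q^T) = Q *m (k *: B) *m Q^T.
  by rewrite scalemxAl scalemxAr.
set Y := Q^T *m X *m Q; have -> : X = Q *m Y *m Q^T by rewrite orth_conjK.
rewrite /DKlog /rhs /Zmat (delta_of_conj_diag hQ eA) (mxlog_conj_diag hQ eA).
rewrite (invmx_conj_diag hQ eA) ?gt_eqF //.
do 4! rewrite ?(orth_conjM _ _ hQ) ?cjZ ?cjB ?cjD.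
congr (_ *m _ *m _); rewrite /Y orth_conjK // -/Y; clearbody Y.
have FlogE := Flog_thetaE (a_gt0 i0) (a_gt0 i1).
apply: mx2P; rewrite !(mulmx2E, mxE) /= ?mulr1n ?mulr0n ?mulr0 ?mul0r ?addr0 ?add0r.
- by rewrite Flogxx; field; rewrite gt_eqF.
- by rewrite FlogE; ring.
- by rewrite FlogC FlogE; ring.
- by rewrite Flogxx; field; rewrite gt_eqF.
Qed.
End DaleckiiKrein.

Section LogDifferenceQuotient.
Context {R : realType}.
Variables (Q : 'M[R]_2) (a : 'rV[R]_2) (Y : 'M[R]_2).
Hypotheses (hQ : is_orth Q) (Ysym : Y i0 i1 = Y i1 i0).
Hypotheses (a1_gt0 : 0 < a 0 i1) (a_sorted : a 0 i1 <= a 0 i0).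

Let a0_gt0 : 0 < a 0 i0. Proof. exact: lt_le_trans a_sorted. Qed.
Let p0 := (a 0 i0 - a 0 i1) / 2.
Let p0_ge0 : 0 <= p0. Proof. by rewrite divr_ge0 // subr_ge0. Qed.

Let B (s : R) := diag_mx a + s *: Y.
Let e1 s := eigmax (B s).
Let e2 s := eigmin (B s).
Let beta s := Flog (e1 s) (e2 s).
Let J : 'M[R]_2 := mx2 1 0 0 (-1).
Let N1 := Y - ((Y i0 i0 + Y i1 i1) / 2) *: 1%:M.

Let B00 s : B s i0 i0 = a 0 i0 + s * Y i0 i0. Proof. by rewrite !mxE /= mulr1n. Qed.
Let B11 s : B s i1 i1 = a 0 i1 + s * Y i1 i1. Proof. by rewrite !mxE /= mulr1n. Qed.
Let B01 s : B s i0 i1 = s * Y i0 i1. Proof. by rewrite !mxE /= mulr0n add0r. Qed.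
Let B10 s : B s i1 i0 = s * Y i0 i1. Proof. by rewrite !mxE /= mulr0n add0r Ysym. Qed.

Let Bsym s : B s i0 i1 = B s i1 i0. Proof. by rewrite B01 B10. Qed.

Let halfgapB s : eig_halfgap (B s) =
  Num.sqrt ((p0 + s * ((Y i0 i0 - Y i1 i1) / 2)) ^+ 2 + (s * Y i0 i1) ^+ 2).
Proof. by rewrite /eig_halfgap B00 B11 B01; congr (Num.sqrt (_ ^+ 2 + _)); rewrite /p0; field. Qed.

Let halfgapB0 : eig_halfgap (B 0) = p0.
Proof. by rewrite halfgapB !mul0r addr0 expr0n /= addr0 sqrtr_sqr ger0_norm. Qed.

Let e10 : e1 0 = a 0 i0.
Proof. by rewrite /e1 /eigmax halfgapB0 B00 B11 !mul0r !addr0 /p0; field. Qed.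

Let e20 : e2 0 = a 0 i1.
Proof. by rewrite /e2 /eigmin halfgapB0 B00 B11 !mul0r !addr0 /p0; field. Qed.

Let halfgapB_cvg : eig_halfgap (B s) @[s --> 0^'] --> p0.
Proof.
have arg_cvg : (p0 + s * ((Y i0 i0 - Y i1 i1) / 2)) ^+ 2 + (s * Y i0 i1) ^+ 2
    @[s --> 0^'] --> p0 ^+ 2 + (0 * Y i0 i1) ^+ 2.
  have hmul : s * Y i0 i1 @[s --> 0^'] --> 0 * Y i0 i1.
    by apply: cvgM; [exact: cvg_within | exact: cvg_cst].
  under eq_fun do rewrite !expr2.
  by rewrite !expr2; apply: cvgD; apply: cvgM => //; exact: affine_cvg.
have := cvg_comp _ _ arg_cvg (@sqrt_continuous R _).
rewrite mul0r expr0n /= addr0 sqrtr_sqr ger0_norm //.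
by under [fun s => eig_halfgap _]eq_fun do rewrite halfgapB.
Qed.

Let e1E s : e1 s = (a 0 i0 + a 0 i1) / 2 + s * ((Y i0 i0 + Y i1 i1) / 2) + eig_halfgap (B s).
Proof. by rewrite /e1 /eigmax B00 B11; congr (_ + _); field. Qed.

Let e2E s : e2 s = (a 0 i0 + a 0 i1) / 2 + s * ((Y i0 i0 + Y i1 i1) / 2) - eig_halfgap (B s).
Proof. by rewrite /e2 /eigmin B00 B11; congr (_ - _); field. Qed.

Let e1_cvg : e1 s @[s --> 0^'] --> a 0 i0.
Proof.
have -> : a 0 i0 = (a 0 i0 + a 0 i1) / 2 + p0 by rewrite /p0; field.
by under eq_fun do rewrite e1E; apply: cvgD halfgapB_cvg; exact: affine_cvg.
Qed.

Let e2_cvg : e2 s @[s --> 0^'] --> a 0 i1.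
Proof.
have -> : a 0 i1 = (a 0 i0 + a 0 i1) / 2 - p0 by rewrite /p0; field.
by under eq_fun do rewrite e2E; apply: cvgB halfgapB_cvg; exact: affine_cvg.
Qed.

Let e2_gt0 : \forall s \near 0^', 0 < e2 s.
Proof. exact: (@cvgr_gt R _ _ _ _ _ e2_cvg 0 a1_gt0). Qed.

Let mxlogB s : 0 < e2 s ->
  mxlog (B s) = (ln (e1 s * e2 s) / 2) *: 1%:M + beta s *: (p0 *: J + s *: N1).
Proof.
move=> e2s_gt0; have e1s_gt0 : 0 < e1 s := lt_le_trans e2s_gt0 (eigmin_le_eigmax _).
rewrite mxlog_sym ?Bsym // /lninterp -/(e1 s) -/(e2 s) -lnM ?posrE //; congr (_ + _ *: _).
by apply: mx2P; rewrite !mxE /= ?mulr1n ?mulr0n ?e1E ?e2E /p0; field.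
Qed.

Let difqB : \forall s \near 0^', s^-1 *: (mxlog (B s) - mxlog (B 0)) =
  ((ln (e1 s * e2 s) - ln (a 0 i0 * a 0 i1)) / s / 2) *: 1%:M
  + (p0 * (beta s - beta 0) / s) *: J + beta s *: N1.
Proof.
near=> s; have s_neq0 : s != 0 by near: s; exact: nbhs_dnbhs_neq.
have e2s_gt0 : 0 < e2 s by near: s; exact: e2_gt0.
rewrite (mxlogB e2s_gt0) mxlogB ?e10 ?e20 //.
by apply/matrixP => i j; rewrite !mxE; field.
Unshelve. all: by end_near.
Qed.

Let lndet_difq_cvg : (ln (e1 s * e2 s) - ln (a 0 i0 * a 0 i1)) / s @[s --> 0^'] -->
  Y i0 i0 / a 0 i0 + Y i1 i1 / a 0 i1.
Proof.
set c := a 0 i0 * Y i1 i1 + Y i0 i0 * a 0 i1.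
have eprod s : e1 s * e2 s - a 0 i0 * a 0 i1 = s * (c + s * (Y i0 i0 * Y i1 i1 - Y i0 i1 ^+ 2)).
  by rewrite /e1 /e2 eigmax_mul_eigmin B00 B11 B01 /c; ring.
have -> : Y i0 i0 / a 0 i0 + Y i1 i1 / a 0 i1 = c / (a 0 i0 * a 0 i1).
  by rewrite /c; field; rewrite !gt_eqF.
apply: ln_difq_cvg; first exact: mulr_gt0.
  exact: cvgM e1_cvg e2_cvg.
apply: cvg_trans; first apply: (near_eq_cvg (f := fun s =>
  c + s * (Y i0 i0 * Y i1 i1 - Y i0 i1 ^+ 2))).
  near=> s; have s_neq0 : s != 0 by near: s; exact: nbhs_dnbhs_neq.
  by rewrite eprod [RHS]mulrC mulKf.
exact: affine_cvg.
Unshelve. all: by end_near.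
Qed.

Let halfgap_difq_cvg : 0 < p0 ->
  (eig_halfgap (B s) - p0) / s @[s --> 0^'] --> (Y i0 i0 - Y i1 i1) / 2.
Proof.
move=> p0_gt0; set d := (Y i0 i0 - Y i1 i1) / 2.
have hp_neq0 s : eig_halfgap (B s) + p0 != 0.
  by rewrite gt_eqF //; have := eig_halfgap_ge0 (B s); lra.
have difqE s : s != 0 -> (eig_halfgap (B s) - p0) / s =
    (d * (2 * p0) + s * (d ^+ 2 + Y i0 i1 ^+ 2)) / (eig_halfgap (B s) + p0).
  (* rationalize: [eig_halfgap (B s) ^+ 2 - p0 ^+ 2] is divisible by [s] *)
  move=> s_neq0; apply/eqP; rewrite eqr_div //.
  have := sqr_eig_halfgap (B s); rewrite B00 B11 B01 => h2.
  have -> : (eig_halfgap (B s) - p0) * (eig_halfgap (B s) + p0) =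
    eig_halfgap (B s) ^+ 2 - p0 ^+ 2 by ring.
  by rewrite h2 /d /p0; apply/eqP; field.
have -> : d = d * (2 * p0) / (p0 + p0) by field; rewrite gt_eqF // addr_gt0.
apply: cvg_trans; first apply: (near_eq_cvg (f := fun s =>
  (d * (2 * p0) + s * (d ^+ 2 + Y i0 i1 ^+ 2)) / (eig_halfgap (B s) + p0))).
  by near=> s; rewrite difqE //; near: s; exact: nbhs_dnbhs_neq.
apply: cvgM; first exact: affine_cvg.
by apply: cvgV; [rewrite gt_eqF ?addr_gt0 | apply: cvgD halfgapB_cvg (cvg_cst _)].
Unshelve. all: by end_near.
Qed.

Let beta0 : beta 0 = Flog (a 0 i0) (a 0 i1).
Proof. by rewrite /beta e10 e20. Qed.

Let beta_cvg : beta s @[s --> 0^'] --> Flog (a 0 i0) (a 0 i1).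
Proof. exact: Flog_cvg a0_gt0 a1_gt0 e1_cvg e2_cvg. Qed.

Let ln_eig_difq_cvg : 0 < p0 ->
  (ln (e1 s) - ln (a 0 i0)) / s @[s --> 0^'] --> Y i0 i0 / a 0 i0 /\
  (ln (e2 s) - ln (a 0 i1)) / s @[s --> 0^'] --> Y i1 i1 / a 0 i1.
Proof.
move=> p0_gt0; set c := (Y i0 i0 + Y i1 i1) / 2.
have gap_cvg := halfgap_difq_cvg p0_gt0.
have e1_difqE s : s != 0 -> (e1 s - a 0 i0) / s = c + (eig_halfgap (B s) - p0) / s.
  by move=> s0; rewrite e1E /c /p0; field.
have e2_difqE s : s != 0 -> (e2 s - a 0 i1) / s = c - (eig_halfgap (B s) - p0) / s.
  by move=> s0; rewrite e2E /c /p0; field.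
split; apply: ln_difq_cvg => //.
- have -> : Y i0 i0 = c + (Y i0 i0 - Y i1 i1) / 2 by rewrite /c; field.
  apply: cvg_trans; first apply: (near_eq_cvg (f := fun s => c + (eig_halfgap (B s) - p0) / s)).
    by near=> s; rewrite e1_difqE //; near: s; exact: nbhs_dnbhs_neq.
  exact: cvgD (cvg_cst _) gap_cvg.
- have -> : Y i1 i1 = c - (Y i0 i0 - Y i1 i1) / 2 by rewrite /c; field.
  apply: cvg_trans; first apply: (near_eq_cvg (f := fun s => c - (eig_halfgap (B s) - p0) / s)).
    by near=> s; rewrite e2_difqE //; near: s; exact: nbhs_dnbhs_neq.
  exact: cvgB (cvg_cst _) gap_cvg.
Unshelve. all: by end_near.
Qed.

(* For [p0 = 0] the eigenvalues of [B s] split like [|s|] and [beta] need not be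
   differentiable at [0]; the factor [p0] makes this term vanish. *)
Let beta_difq_cvg : p0 * (beta s - beta 0) / s @[s --> 0^'] -->
  (Y i0 i0 / a 0 i0 - Y i1 i1 / a 0 i1 - Flog (a 0 i0) (a 0 i1) * (Y i0 i0 - Y i1 i1)) / 2.
Proof.
have [p0_eq0|p0_gt0] := eqVneq p0 0.
  have a10 : a 0 i1 = a 0 i0 by move: p0_eq0; rewrite /p0 => /eqP; lra.
  rewrite a10 Flogxx [X in _ --> X](_ : _ = 0); last by field; rewrite gt_eqF.
  by under eq_fun do rewrite p0_eq0 !mul0r; exact: cvg_cst.
have {p0_gt0}p0_gt0 : 0 < p0 by rewrite lt_def p0_gt0.
have [ln_e1_cvg ln_e2_cvg] := ln_eig_difq_cvg p0_gt0.
have betaE s : s != 0 -> p0 * (beta s - beta 0) / s =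
    ((ln (e1 s) - ln (a 0 i0)) / s - (ln (e2 s) - ln (a 0 i1)) / s) / 2
    - (eig_halfgap (B s) - p0) / s * beta s.
  move=> s0; rewrite beta0.
  have gap : e1 s - e2 s = 2 * eig_halfgap (B s) by rewrite e1E e2E; ring.
  have gap0 : a 0 i0 - a 0 i1 = 2 * p0 by rewrite /p0; field.
  have ln1 : ln (e1 s) = ln (e2 s) + 2 * eig_halfgap (B s) * beta s.
    by rewrite -gap mul_subr_Flog; ring.
  have ln0 : ln (a 0 i0) = ln (a 0 i1) + 2 * p0 * Flog (a 0 i0) (a 0 i1).
    by rewrite -gap0 mul_subr_Flog; ring.
  by rewrite ln1 ln0; field.
have -> : (Y i0 i0 / a 0 i0 - Y i1 i1 / a 0 i1 - Flog (a 0 i0) (a 0 i1) * (Y i0 i0 - Y i1 i1)) / 2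
  = (Y i0 i0 / a 0 i0 - Y i1 i1 / a 0 i1) / 2 - (Y i0 i0 - Y i1 i1) / 2 * Flog (a 0 i0) (a 0 i1).
  by ring.
apply: cvg_trans; first apply: (near_eq_cvg (f := fun s =>
  ((ln (e1 s) - ln (a 0 i0)) / s - (ln (e2 s) - ln (a 0 i1)) / s) / 2
  - (eig_halfgap (B s) - p0) / s * beta s)).
  by near=> s; rewrite betaE //; near: s; exact: nbhs_dnbhs_neq.
apply: cvgB; first by apply: cvgM; [apply: cvgB | exact: cvg_cst].
exact: cvgM (halfgap_difq_cvg p0_gt0) beta_cvg.
Unshelve. all: by end_near.
Qed.

Let difq_limitE :
  ((Y i0 i0 / a 0 i0 + Y i1 i1 / a 0 i1) / 2) *: 1%:M
  + ((Y i0 i0 / a 0 i0 - Y i1 i1 / a 0 i1 - Flog (a 0 i0) (a 0 i1) * (Y i0 i0 - Y i1 i1)) / 2) *: J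
  + Flog (a 0 i0) (a 0 i1) *: N1 = \matrix_(k, l) (Flog (a 0 k) (a 0 l) * Y k l).
Proof.
apply: mx2P; rewrite !mxE /= ?mulr1n ?mulr0n ?Flogxx ?(FlogC (a 0 i1)) -?Ysym;
  by field; rewrite ?gt_eqF.
Qed.

Lemma mxlog_conj_difq_cvg :
  s^-1 *: (mxlog (Q *m (diag_mx a + s *: Y) *m Q^T) - mxlog (Q *m diag_mx a *m Q^T))
    @[s --> 0^'] --> Q *m (\matrix_(k, l) (Flog (a 0 k) (a 0 l) * Y k l)) *m Q^T.
Proof.
have conjE (u v w : R) (M N : 'M[R]_2) : Q *m (u *: 1%:M + v *: M + w *: N) *m Q^T =
    u *: 1%:M + v *: (Q *m M *m Q^T) + w *: (Q *m N *m Q^T).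
  by rewrite !mulmxDr !mulmxDl -!scalemxAr -!scalemxAl mulmx1 orth_mulmxT.
rewrite -difq_limitE conjE.
apply: cvg_trans; first apply: (near_eq_cvg (f := fun s =>
  ((ln (e1 s * e2 s) - ln (a 0 i0 * a 0 i1)) / s / 2) *: 1%:M
  + (p0 * (beta s - beta 0) / s) *: (Q *m J *m Q^T) + beta s *: (Q *m N1 *m Q^T))).
  near=> s; rewrite -conjE.
  have {2}-> : diag_mx a = B 0 by rewrite /B scale0r addr0.
  rewrite (mxlog_conj hQ (Bsym s)) (mxlog_conj hQ (Bsym 0)).
  rewrite -mulmxBl -mulmxBr scalemxAl scalemxAr; congr (_ *m _ *m _).
  by apply/esym; near: s; exact: difqB.
apply: cvgD; first apply: cvgD.
- by apply: cvgZ; [apply: cvgM lndet_difq_cvg (cvg_cst _) | exact: cvg_cst].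
- by apply: cvgZ; [exact: beta_difq_cvg | exact: cvg_cst].
- by apply: cvgZ; [exact: beta_cvg | exact: cvg_cst].
Unshelve. all: by end_near.
Qed.
End LogDifferenceQuotient.

Lemma mxlog_difq_cvg {R : realType} (A X : 'M[R]_2) : spd A -> X^T = X ->
  s^-1 *: (mxlog (A + s *: X) - mxlog A) @[s --> 0^'] --> rhs A X.
Proof.
move=> hA hX; have Asym : A i0 i1 = A i1 i0 by rewrite -[in LHS]hA.1 mxE.
have [Q hQ eA] := spectral2 Asym; set a := rv2 _ _ in eA.
have a_gt0 := spd_conj_diag_gt0 hA hQ eA.
set Y := Q^T *m X *m Q.
have Ysym : Y i0 i1 = Y i1 i0.
  have YT : Y^T = Y by rewrite /Y !trmx_mul trmxK hX mulmxA.
  by rewrite -[in LHS]YT [LHS]mxE.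
have eAs s : A + s *: X = Q *m (diag_mx a + s *: Y) *m Q^T.
  by rewrite mulmxDr mulmxDl -eA -scalemxAr -scalemxAl orth_conjK.
rewrite -(DKlog_rhs X hA hQ eA) /DKlog -/Y.
under eq_fun do rewrite eAs; rewrite eA.
by apply: mxlog_conj_difq_cvg; rewrite // !mx2E eigmin_le_eigmax.
Qed.

Theorem mainTheorem9 (R : realType) (A X : 'M[R]_2) :
  spd A ->
  (forall (Q : 'M[R]_2) (a : 'rV[R]_2),
      is_orth Q -> A = Q *m diag_mx a *m Q^T ->
      DKlog Q a X = rhs A X) /\
  (X^T = X -> forall i j : 'I_2,
      (fun s : R => (mxlog (A + s *: X) - mxlog A) i j / s) @ 0^' --> rhs A X i j).
Proof.
move=> hA; split=> [Q a hQ eA|hX i j]; first exact: DKlog_rhs.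
have -> : (fun s => (mxlog (A + s *: X) - mxlog A) i j / s) =
    (fun s => (s^-1 *: (mxlog (A + s *: X) - mxlog A)) i j).
  by apply: funext => s; rewrite [RHS]mxE mulrC.
exact: cvg_comp (mxlog_difq_cvg hA hX) (@coord_continuous _ _ _ i j _).
Qed.
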